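(* For any stable pair of cross-intersecting families $(\mathcal{A}, \mathcal{B})$ in $\mathcal{I}_{n, k}^r$, the pair $(\phi(\mathcal{A}), \phi(\mathcal{B}))$ is a cross-intersecting pair of families in $\binom{[n]}{\leq r}$.
   Context: $\Gamma_{n,k}$ is the disjoint union of $n$ copies of $K_k$, with vertices $(i,j)$, $i\in[n]$, $j\in[k]$; $\mathcal{I}_{n,k}^r$ is the set of its independent sets of size $r$. $\binom{[n]}{\le r}$ denotes the set of subsets of $[n]$ of size at most $r$. The projection $\phi:\mathcal{I}_{n,k}^r\to\binom{[n]}{\le r}$ is $\phi(X)=\{i : (i,1)\in X\}$, and $\phi(\mathcal{F})=\{\phi(X):X\in\mathcal{F}\}$. For $i\in[n]$, $s\in[2,k]$: $P_{i,s}(X)=(X\setminus\{(i,s)\})\cup\{(i,1)\}$ if $(i,s)\in X$, else $X$; $\pi_{i,s}(\mathcal{F})=\{P_{i,s}(X): X\in\mathcal{F}\}\cup\{X\in\mathcal{F}: P_{i,s}(X)\in\mathcal{F}\}$. A family is stable if $\pi_{i,s}(\mathcal{F})=\mathcal{F}$ for all $i\in[n],s\in[2,k]$; a pair is stable if both families are. A pair of non-empty families (of non-empty sets) is cross-intersecting if every member of the first meets every member of the second. *)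

From mathcomp Require Import all_boot.
Set Implicit Arguments. Unset Strict Implicit. Unset Printing Implicit Defensive.

(* Vertices of Gamma_{n,k}: pairs (i,j) with i : 'I_n (the copy) and
   j : 'I_k (the vertex in the copy).  Indices are 0-based, so the paper's
   colour 1 is the ordinal with value 0, and s in [2,k] is an ordinal
   s : 'I_k with 0 < s. *)
Definition vert (n k : nat) := ('I_n * 'I_k)%type.

(* Independent in the disjoint union of n cliques K_k: no two distinct
   vertices lie in the same copy. *)
Definition independent n k (X : {set vert n k}) : bool :=
  [forall x in X, forall y in X, (x.1 == y.1) ==> (x == y)].

Definition indep_sets n k r : {set {set vert n k}} :=
  [set X : {set vert n k} | independent X && (#|X| == r)].

Definition small_sets n r : {set {set 'I_n}} :=
  [set S : {set 'I_n} | #|S| <= r].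

Definition phi n k (X : {set vert n k}) : {set 'I_n} :=
  [set i | [exists j : 'I_k, (val j == 0) && ((i, j) \in X)]].

Definition phiF n k (F : {set {set vert n k}}) : {set {set 'I_n}} :=
  [set phi X | X in F].

(* The colour-1 vertex index, obtained from any s : 'I_k (which forces k > 0). *)
Definition col1 k (s : 'I_k) : 'I_k :=
  Ordinal (leq_ltn_trans (leq0n s) (ltn_ord s)).

Definition Pshift n k (i : 'I_n) (s : 'I_k) (X : {set vert n k}) : {set vert n k} :=
  if (i, s) \in X then (X :\ (i, s)) :|: [set (i, col1 s)] else X.

Definition pishift n k (i : 'I_n) (s : 'I_k) (F : {set {set vert n k}})
  : {set {set vert n k}} :=
  [set Pshift i s X | X in F] :|: [set X in F | Pshift i s X \in F].

Definition stable n k (F : {set {set vert n k}}) : Prop :=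
  forall (i : 'I_n) (s : 'I_k), 0 < val s -> pishift i s F = F.

Definition cross_intersecting (T : finType) (A B : {set {set T}}) : Prop :=
  [/\ A != set0, B != set0,
      (forall X, X \in A -> X != set0),
      (forall Y, Y \in B -> Y != set0) &
      (forall X Y, X \in A -> Y \in B -> X :&: Y != set0)].

From mathcomp Require Import all_boot.
Set Implicit Arguments. Unset Strict Implicit.

(* Fix Y in B.  Call a vertex (i,s) of X in A stray when s is not colour 1 and
   i is not in phi(Y).  Stability lets us replace a stray vertex (i,s) by
   (i,1) without leaving A; this adds i to phi(X) but, as i is not in phi(Y),
   does not change phi(X) :&: phi(Y), and it removes one stray vertex.  Once
   X has no stray vertex, any common vertex (i,t) of X and Y gives a common
   element i of phi(X) and phi(Y): either t is colour 1, or i lies in phi(Y),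
   i.e. (i,1) is in Y, and independence of Y forces t to be colour 1 anyway. *)

Section Shifting.
Variables n k : nat.
Implicit Types (X Y : {set vert n k}) (F : {set {set vert n k}}).

Lemma mem_phi X i (s : 'I_k) : (i \in phi X) = ((i, col1 s) \in X).
Proof.
rewrite inE; apply/existsP/idP => [[j /andP[/eqP j0 Xij]] | Xi1].
  by have -> : col1 s = j by apply: val_inj; rewrite j0.
by exists (col1 s).
Qed.

Lemma phi_card X : #|phi X| <= #|X|.
Proof.
have /subset_leq_card/leq_trans-> // : phi X \subset [set v.1 | v in X].
  apply/subsetP => i; rewrite inE => /existsP[j /andP[_ Xij]].
  by apply/imsetP; exists (i, j).
exact: leq_imset_card.
Qed.

Lemma independent_inj Y i j j' :
  independent Y -> (i, j) \in Y -> (i, j') \in Y -> j = j'.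
Proof.
move=> /forallP/(_ (i, j)) Y_ind Yj Yj'.
by move: Y_ind; rewrite Yj => /forallP/(_ (i, j')); rewrite Yj' eqxx => /eqP[].
Qed.

Lemma Pshift_stable F i (s : 'I_k) X :
  stable F -> 0 < val s -> X \in F -> Pshift i s X \in F.
Proof. by move=> stF s_gt0 XF; rewrite -(stF i s s_gt0) inE imset_f. Qed.

Lemma phi_Pshift X i (s : 'I_k) :
  0 < val s -> (i, s) \in X -> phi (Pshift i s X) = i |: phi X.
Proof.
move=> s_gt0 Xis; apply/setP => i'.
rewrite in_setU1 !(mem_phi _ _ s) /Pshift Xis !inE.
have [-> | ne_i] := eqVneq i' i; first by rewrite eqxx orbT.
by rewrite !xpair_eqE (negbTE ne_i) orbF.
Qed.

Definition stray Y X : {set vert n k} :=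
  [set v in X | (val v.2 != 0) && (v.1 \notin phi Y)].

Lemma stray_Pshift Y X i (s : 'I_k) :
  (i, s) \in stray Y X -> stray Y (Pshift i s X) \subset stray Y X :\ (i, s).
Proof.
rewrite inE => /andP[Xis _]; apply/subsetP => v.
by rewrite /Pshift Xis !inE => /andP[/orP[/andP[-> ->] // | /eqP-> /=]].
Qed.

Lemma phi_meet_no_stray Y X :
  independent Y -> X :&: Y != set0 -> stray Y X = set0 ->
  phi X :&: phi Y != set0.
Proof.
move=> Y_ind /set0Pn[[i t]]; rewrite inE => /andP[Xit Yit] no_stray.
have t0 : val t = 0.
  have : (i, t) \notin stray Y X by rewrite no_stray inE.
  rewrite inE Xit /= negb_and !negbK (mem_phi _ _ t) => /orP[/eqP // | Yi1].
  by rewrite -(independent_inj Y_ind Yi1 Yit).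
have t_col1 : col1 t = t by apply: val_inj.
by apply/set0Pn; exists i; rewrite inE !(mem_phi _ _ t) t_col1 Xit Yit.
Qed.

Lemma stable_phi_meet F Y X :
  stable F -> independent Y -> (forall X', X' \in F -> X' :&: Y != set0) ->
  X \in F -> phi X :&: phi Y != set0.
Proof.
move=> stF Y_ind F_meet_Y.
move: {2}#|stray Y X| (leqnn #|stray Y X|) => m; elim: m X => [|m IHm] X le_m XF.
  by apply: phi_meet_no_stray; rewrite ?F_meet_Y //; apply/eqP; rewrite -cards_eq0 -leqn0.
have [no_stray | [[i s] stray_is]] := set_0Vmem (stray Y X).
  by apply: IHm; rewrite ?no_stray ?cards0.
move: (stray_is); rewrite inE /= => /andP[Xis /andP[s_neq0 iNY]].
have s_gt0 : 0 < val s by rewrite lt0n.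
have := IHm (Pshift i s X); rewrite phi_Pshift // setIUl.
have -> : [set i] :&: phi Y = set0 by apply/disjoint_setI0; rewrite disjoints1.
rewrite set0U; apply; last exact: Pshift_stable.
rewrite (cardsD1 (i, s)) stray_is in le_m.
exact: leq_trans (subset_leq_card (stray_Pshift stray_is)) le_m.
Qed.

Lemma phiF_small_sets r F :
  F \subset indep_sets n k r -> phiF F \subset small_sets n r.
Proof.
move=> /subsetP F_indep; apply/subsetP => _ /imsetP[X XF ->].
by have := F_indep X XF; rewrite !inE => /andP[_ /eqP <-]; apply: phi_card.
Qed.

End Shifting.

Lemma meet_cross_intersecting (T : finType) (A B : {set {set T}}) :
  A != set0 -> B != set0 ->
  (forall X Y, X \in A -> Y \in B -> X :&: Y != set0) ->
  cross_intersecting A B.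
Proof.
move=> nA nB meet; split=> // [X AX | Y BY].
  have /set0Pn[Y0 BY0] := nB.
  by apply: contraNneq (meet X Y0 AX BY0) => ->; rewrite set0I.
have /set0Pn[X0 AX0] := nA.
by apply: contraNneq (meet X0 Y AX0 BY) => ->; rewrite setI0.
Qed.

Theorem corollary4p3 (n k r : nat) (A B : {set {set vert n k}}) :
  A \subset indep_sets n k r -> B \subset indep_sets n k r ->
  stable A -> stable B ->
  cross_intersecting A B ->
  [/\ phiF A \subset small_sets n r, phiF B \subset small_sets n r &
      cross_intersecting (phiF A) (phiF B)].
Proof.
move=> A_indep B_indep stA _ [nA nB _ _ AB_meet].
split; [exact: phiF_small_sets | exact: phiF_small_sets |].
apply: meet_cross_intersecting; rewrite ?imset_eq0 //.
move=> _ _ /imsetP[X XA ->] /imsetP[Y YB ->].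
apply: (stable_phi_meet stA) => // [|X' X'A]; last exact: AB_meet.
by have := subsetP B_indep Y YB; rewrite inE => /andP[].
Qed.
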